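(* Let $c\in\mathbb{R}^n$, $A\in\mathbb{R}^{m\times n}$, $b\in\mathbb{R}^m$ and $\emptyset\neq I\subseteq\{1,\dots,n\}$, and let $X:=\{x\in\mathbb{R}^n : Ax\ge b,\ x_I\in[0,1]^I\}$ be nonempty and $Y:=\{0,1\}^I$. Consider the problem $$\min_{x,y}\ \|x_I-y\|_1 \quad\text{s.t.}\quad x\in X,\ y\in Y. \qquad (\ast)$$ Apply the alternating direction method to $(\ast)$: starting from $(x^0,y^0)\in X\times Y$, for $k=0,1,\dots$ compute $x^{k+1}\in\arg\min_{x\in X}\|x_I-y^k\|_1$ (a global minimizer) and $y^{k+1}\in\arg\min_{y\in Y}\|x^{k+1}_I-y\|_1$, where ties in the $y$-step are resolved by choosing the lexicographically minimal minimizer, so that the $y$-step has a unique output; the method stops as soon as the current iterate $(x^k,y^k)$ is a partial minimum of $(\ast)$. Then the sequence of iterates $z^k=(x^k,y^k)$ does not cycle, i.e., there is no iteration $k$ and no $l\ge 2$ with $z^k=z^{k+l}$.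
   Context: A point $(x^*,y^* )\in X\times Y$ is a partial minimum of $(\ast)$ if $\|x^*_I-y^*\|_1\le\|x_I-y^*\|_1$ for all $x\in X$ and $\|x^*_I-y^*\|_1\le \|x^*_I-y\|_1$ for all $y\in Y$. $x_I$ denotes the subvector of $x$ with components indexed by $I$. *)

From HB Require Import structures.
From mathcomp Require Import all_boot all_order all_algebra.
From mathcomp Require Import reals.
Set Implicit Arguments. Unset Strict Implicit. Unset Printing Implicit Defensive.
Import Order.TTheory GRing.Theory Num.Theory.
Local Open Scope ring_scope.

Section FP.
Variables (R : realType) (n m : nat).
Variables (A : 'M[R]_(m, n)) (b : 'cV[R]_m) (I : {set 'I_n}).

Definition inX (x : 'cV[R]_n) : Prop :=
  (forall i : 'I_m, b i 0 <= (A *m x) i 0) /\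
  (forall j : 'I_n, j \in I -> 0 <= x j 0 <= 1).

(* Y = {0,1}^I, encoded as vectors of R^n with entries in {0,1} on I
   and 0 outside I (a bijective encoding). *)
Definition inY (y : 'cV[R]_n) : Prop :=
  forall j : 'I_n, (j \in I -> y j 0 = 0 \/ y j 0 = 1) /\ (j \notin I -> y j 0 = 0).

Definition dist1 (x y : 'cV[R]_n) : R := \sum_(j in I) `|x j 0 - y j 0|.

Definition partial_min (x y : 'cV[R]_n) : Prop :=
  inX x /\ inY y /\
  (forall x' , inX x' -> dist1 x y <= dist1 x' y) /\
  (forall y' , inY y' -> dist1 x y <= dist1 x y').

Definition lex_lt (y y' : 'cV[R]_n) : Prop :=
  exists j : 'I_n, [/\ j \in I, y j 0 < y' j 0 &
    forall i : 'I_n, i \in I -> (i < j)%N -> y i 0 = y' i 0].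

Definition x_step (yk x : 'cV[R]_n) : Prop :=
  inX x /\ forall x', inX x' -> dist1 x yk <= dist1 x' yk.

Definition y_argmin (xk y : 'cV[R]_n) : Prop :=
  inY y /\ forall y', inY y' -> dist1 xk y <= dist1 xk y'.

Definition y_step (xk y : 'cV[R]_n) : Prop :=
  y_argmin xk y /\ forall y', y_argmin xk y' -> y' = y \/ lex_lt y y'.

End FP.

From HB Require Import structures.
From mathcomp Require Import all_boot all_order all_algebra.
From mathcomp Require Import reals.
Set Implicit Arguments. Unset Strict Implicit. Unset Printing Implicit Defensive.
Import Order.TTheory GRing.Theory Num.Theory.
Local Open Scope ring_scope.

(* Along the iterates the objective can only decrease: the x-step does not
   increase ||x_I - y||_1 and neither does the y-step.  On a cycle
   z^k = z^(k+l) the objective is therefore constant, so every y^j of the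
   cycle still minimises the y-subproblem for x^(j+1), and the lexicographic
   tie-breaking gives y^(k+l) <=lex ... <=lex y^(k+1) <=lex y^k = y^(k+l).
   Hence y^(k+1) = y^k, which makes (x^(k+1), y^(k+1)) a partial minimum;
   since l >= 2 the method would have stopped at iteration k+1. *)

Lemma rel_chain (T : Type) (r : T -> T -> Prop) (f : nat -> T) (k d : nat) :
  (forall t, r t t) -> (forall s t u, r s t -> r t u -> r s u) ->
  (forall j, (k <= j < k + d)%N -> r (f j.+1) (f j)) ->
  r (f (k + d)%N) (f k).
Proof.
move=> r_refl r_trans r_step; elim: d r_step => [|d IHd] r_step.
  by rewrite addn0.
rewrite addnS; apply: r_trans (r_step _ _) (IHd _) => [|j /andP[kj jkd]].
  by rewrite leq_addr addnS ltnS leqnn.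
by apply: r_step; rewrite kj addnS ltnS ltnW.
Qed.

Section LexOrder.
Variables (R : realType) (n : nat) (I : {set 'I_n}).

Lemma lex_lt_irr (u : 'cV[R]_n) : ~ lex_lt I u u.
Proof. by case=> j [_]; rewrite ltxx. Qed.

Lemma lex_lt_trans (u v w : 'cV[R]_n) :
  lex_lt I u v -> lex_lt I v w -> lex_lt I u w.
Proof.
move=> [i [iI ltuv equv]] [j [jI ltvw eqvw]].
case: (ltngtP i j) => [ij|ji|/val_inj eij].
- exists i; split=> //; first by rewrite -(eqvw i iI ij).
  by move=> h hI hi; rewrite equv // eqvw // (ltn_trans hi ij).
- exists j; split=> //; first by rewrite (equv j jI ji).
  by move=> h hI hj; rewrite equv ?eqvw // (ltn_trans hj ji).
- subst j; exists i; split; [by [] | exact: lt_trans ltvw |].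
  by move=> h hI hi; rewrite equv // eqvw.
Qed.

Definition lex_le (u v : 'cV[R]_n) : Prop := u = v \/ lex_lt I u v.

Lemma lex_le_refl (u : 'cV[R]_n) : lex_le u u.
Proof. by left. Qed.

Lemma lex_le_trans (u v w : 'cV[R]_n) : lex_le u v -> lex_le v w -> lex_le u w.
Proof. by move=> [->|uv] // [<-|vw]; right=> //; apply: lex_lt_trans uv vw. Qed.

Lemma lex_le_anti (u v : 'cV[R]_n) : lex_le u v -> lex_le v u -> u = v.
Proof.
move=> [//|uv] [//|vu].
by case: (lex_lt_irr (lex_lt_trans uv vu)).
Qed.

Lemma y_step_lex_le (xk y y' : 'cV[R]_n) :
  y_step I xk y -> y_argmin I xk y' -> lex_le y y'.
Proof. by move=> [_ ylex] /ylex [->|]; [left | right]. Qed.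

End LexOrder.

Lemma x_step_y_argmin_partial_min (R : realType) (n m : nat)
    (A : 'M[R]_(m, n)) (b : 'cV[R]_m) (I : {set 'I_n}) (x y : 'cV[R]_n) :
  x_step A b I y x -> y_argmin I x y -> partial_min A b I x y.
Proof. by move=> [xX xmin] [yY ymin]. Qed.

Section AlternatingIterates.
Variables (R : realType) (n m : nat) (A : 'M[R]_(m, n)) (b : 'cV[R]_m).
Variables (I : {set 'I_n}) (K : nat) (x y : nat -> 'cV[R]_n).
Hypotheses (x0X : inX A b I (x 0%N)) (y0Y : inY I (y 0%N)).
Hypothesis iterate_step : forall k : nat, (k < K)%N ->
  [/\ ~ partial_min A b I (x k) (y k),
      x_step A b I (y k) (x k.+1) &
      y_step I (x k.+1) (y k.+1)].

Lemma iterate_inX j : (j <= K)%N -> inX A b I (x j).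
Proof. by case: j => // j /iterate_step[_ []]. Qed.

Lemma iterate_inY j : (j <= K)%N -> inY I (y j).
Proof. by case: j => // j /iterate_step[_ _ [[]]]. Qed.

Lemma dist1_x_step j : (j < K)%N ->
  dist1 I (x j.+1) (y j) <= dist1 I (x j) (y j).
Proof. by move=> jK; case: (iterate_step jK) => _ [_ /(_ _ (iterate_inX (ltnW jK)))]. Qed.

Lemma dist1_y_step j : (j < K)%N ->
  dist1 I (x j.+1) (y j.+1) <= dist1 I (x j.+1) (y j).
Proof.
by move=> jK; case: (iterate_step jK) => _ _ [[_ /(_ _ (iterate_inY (ltnW jK)))]].
Qed.

Lemma dist1_iterate_nonincreasing i d : (i + d <= K)%N ->
  dist1 I (x (i + d)%N) (y (i + d)%N) <= dist1 I (x i) (y i).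
Proof.
move=> idK.
apply: (rel_chain (r := fun s t => s <= t) (f := fun j => dist1 I (x j) (y j))) => [s|s t u|j /andP[_ jid]].
- exact: lexx.
- exact: le_trans.
- have jK : (j < K)%N by apply: leq_trans idK.
  exact: le_trans (dist1_y_step jK) (dist1_x_step jK).
Qed.

Section Cycle.
Variables (k l : nat).
Hypotheses (klK : (k + l <= K)%N) (x_cycle : x (k + l)%N = x k)
  (y_cycle : y (k + l)%N = y k).

Lemma cycle_index_lt j : (k <= j < k + l)%N -> (j < K)%N.
Proof. by case/andP=> _ /leq_trans; apply. Qed.

(* With F j := dist1 (x j) (y j), the chain
   F (j+1) <= dist1 (x (j+1)) (y j) <= F j <= F k = F (k+l) <= F (j+1) closes up. *)
Lemma cycle_dist1_y_step_eq j : (k <= j < k + l)%N ->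
  dist1 I (x j.+1) (y j.+1) = dist1 I (x j.+1) (y j).
Proof.
move=> jkl; have jK := cycle_index_lt jkl; case/andP: jkl => kj jkl.
apply/le_anti; rewrite dist1_y_step //=.
apply: le_trans (dist1_x_step jK) _.
have := dist1_iterate_nonincreasing (i := k) (d := (j - k)%N).
rewrite subnKC // => /(_ (ltnW jK)) /le_trans; apply.
have := dist1_iterate_nonincreasing (i := j.+1) (d := (k + l - j.+1)%N).
by rewrite subnKC // x_cycle y_cycle; apply.
Qed.

Lemma cycle_y_argmin j : (k <= j < k + l)%N -> y_argmin I (x j.+1) (y j).
Proof.
move=> jkl; have jK := cycle_index_lt jkl.
case: (iterate_step jK) => _ _ [[_ ymin] _].
split=> [|y' y'Y]; first exact: iterate_inY (ltnW jK).
by rewrite -cycle_dist1_y_step_eq //; apply: ymin.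
Qed.

Lemma cycle_lex_le j : (k <= j < k + l)%N -> lex_le I (y j.+1) (y j).
Proof.
move=> jkl; have jK := cycle_index_lt jkl.
case: (iterate_step jK) => _ _ /y_step_lex_le; apply; exact: cycle_y_argmin.
Qed.

Lemma cycle_y_fixed : (0 < l)%N -> y k.+1 = y k.
Proof.
move=> l_gt0; apply: lex_le_anti; first by apply: cycle_lex_le; rewrite leqnn -{1}[k]addn0 ltn_add2l.
rewrite -[in X in lex_le _ X _]y_cycle -(prednK l_gt0) addnS -addSn.
apply: (rel_chain (r := fun s t => lex_le I s t) (f := y)) => [s|s t u|j /andP[kj jkl]].
- exact: lex_le_refl.
- exact: lex_le_trans.
- by rewrite addSn -addnS (prednK l_gt0) in jkl; apply: cycle_lex_le; rewrite ltnW.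
Qed.

Lemma cycle_partial_min : (0 < l)%N -> partial_min A b I (x k.+1) (y k.+1).
Proof.
move=> l_gt0; have kK : (k < K)%N by apply: leq_trans klK; rewrite -addn1 leq_add2l.
case: (iterate_step kK) => _ xstep [yargmin _].
by apply: x_step_y_argmin_partial_min => //; rewrite cycle_y_fixed.
Qed.

End Cycle.
End AlternatingIterates.

Theorem mainTheorem1 (R : realType) (n m : nat) (c : 'cV[R]_n)
  (A : 'M[R]_(m, n)) (b : 'cV[R]_m) (I : {set 'I_n}) :
  I != set0 ->
  (exists x, inX A b I x) ->
  forall (K : nat) (x y : nat -> 'cV[R]_n),
    inX A b I (x 0%N) -> inY I (y 0%N) ->
    (forall k : nat, (k < K)%N ->
       [/\ ~ partial_min A b I (x k) (y k),
           x_step A b I (y k) (x k.+1) &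
           y_step I (x k.+1) (y k.+1)]) ->
    forall k l : nat, (2 <= l)%N -> (k + l <= K)%N ->
      (x k, y k) <> (x (k + l)%N, y (k + l)%N).
Proof.
(* Nonemptiness of I and of X only guarantees that the method is well defined. *)
move=> _ _ K x y x0X y0Y iterate_step k l l_ge2 klK [x_cycle y_cycle].
have l_gt0 : (0 < l)%N by apply: leq_trans l_ge2.
have k1K : (k.+1 < K)%N by apply: leq_trans klK; rewrite -addn2 leq_add2l.
case: (iterate_step _ k1K) => stop_fails _ _; apply: stop_fails.
exact: (cycle_partial_min x0X y0Y iterate_step klK).
Qed.
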